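(* Let $n\ge 3$ and let $\mathcal{P}_E(D_{2n})$ be the enhanced power graph of the dihedral group $D_{2n}$. Then the Sombor spectrum of $\mathcal{P}_E(D_{2n})$ consists of $-(n-1)\sqrt2$ with multiplicity $n-2$, $0$ with multiplicity $n-1$, and the three roots (with multiplicity) of \[x^2\big(x-(n-1)(n-2)\sqrt2\big)-(n-1)(5n^2-6n+2)x-2n(2n^2-2n+1)\big(x-(n-1)(n-2)\sqrt2\big).\]
   Context: For a finite simple graph $\Gamma$ with vertices $u_1,\dots,u_N$, the Sombor matrix $S(\Gamma)$ has $(i,j)$ entry $\sqrt{\deg(u_i)^2+\deg(u_j)^2}$ if $u_i,u_j$ are adjacent and $0$ otherwise; the Sombor spectrum is the multiset of its eigenvalues. $D_{2n}=\langle a,b: a^n=b^2=e,\ ba=a^{-1}b\rangle$. The enhanced power graph $\mathcal{P}_E(G)$ of a group $G$ has vertex set $G$, two distinct vertices being adjacent iff both belong to a common cyclic subgroup of $G$. *)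

From mathcomp Require Import all_boot all_order all_algebra all_fingroup all_solvable.
Set Implicit Arguments. Unset Strict Implicit. Unset Printing Implicit Defensive.
Import GRing.Theory Num.Theory.
Local Open Scope ring_scope.

Definition epg_adj (gT : finGroupType) (x y : gT) : bool :=
  (x != y) && [exists z : gT, (x \in <[z]>%g) && (y \in <[z]>%g)].

Definition gdeg (T : finType) (e : rel T) (x : T) : nat := #|[set y | e x y]|.

Definition sombor_matrix (R : rcfType) (T : finType) (e : rel T) : 'M[R]_#|T| :=
  \matrix_(i, j) (if e (enum_val i) (enum_val j)
                  then Num.sqrt (((gdeg e (enum_val i)) ^ 2)%:R
                                 + ((gdeg e (enum_val j)) ^ 2)%:R)
                  else 0).

From mathcomp Require Import all_boot all_order all_algebra all_fingroup all_solvable.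
From mathcomp Require Import ring zify.
Set Implicit Arguments. Unset Strict Implicit. Unset Printing Implicit Defensive.
Import GRing.Theory Num.Theory.
Local Open Scope ring_scope.

(* The enhanced power graph of D_2n is the identity joined to every vertex, a
   clique on the n - 1 nontrivial rotations (they all lie in the cyclic rotation
   subgroup), and the n reflections as pendant vertices (a reflection only
   generates {1, s}).  With degrees 2n - 1, n - 1 and 1, the Sombor matrix is
   constant on the blocks of this three-class partition, which is equitable.
   Adding every class to a representative column, and subtracting the
   representative row from the other rows of its class, makes the
   characteristic matrix block triangular: one block is the characteristic
   matrix of the 3 x 3 quotient matrix, the other is diagonal, with
   X + (n - 1) sqrt 2 on the clique (n - 2 times) and X on the pendants
   (n - 1 times). *)

Lemma det_mx33 (R : comNzRingType) (f : nat -> nat -> R) :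
  \det (\matrix_(i < 3, j < 3) f i j)
  = f 0 0 * (f 1 1 * f 2 2 - f 1 2 * f 2 1)
    - f 0 1 * (f 1 0 * f 2 2 - f 1 2 * f 2 0)
    + f 0 2 * (f 1 0 * f 2 1 - f 1 1 * f 2 0).
Proof.
rewrite (expand_det_row _ 0) !big_ord_recl big_ord0 /cofactor.
rewrite !(expand_det_row _ 0) !big_ord_recl !big_ord0 /cofactor.
by rewrite !det_mx11 !mxE /= expr0 expr1; ring.
Qed.

Section ConeMatrix.
Variables (R : comNzRingType) (p q : nat) (a b c : R).
Local Notation N := (p + q)%N.

(* Vertices 0, 1, 2 represent the hub, the clique and the pendant class; they
   are followed by p further clique vertices and q further pendant vertices. *)
Definition cone_class (i : nat) : nat :=
  if (i < 3)%N then i else if (i < 3 + p)%N then 1%N else 2%N.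

Definition class_weight (k l : nat) : R :=
  match k, l with
  | 0, 1 | 1, 0 => a
  | 0, 2 | 2, 0 => b
  | 1, 1 => c
  | _, _ => 0%R
  end%N.

Definition class_size (k : nat) : nat :=
  match k with 0 => 1 | 1 => p.+1 | _ => q.+1 end%N.

Definition cone_matrix : 'M[R]_(3 + N) :=
  \matrix_(i, j) if i == j then 0 else class_weight (cone_class i) (cone_class j).

Definition cone_quotient : 'M[R]_3 :=
  \matrix_(k, l) (class_weight k l *+ (class_size l - (k == l))%N).

Lemma cone_class_lshift (k : 'I_3) : cone_class (lshift N k) = k.
Proof. by rewrite /cone_class /= ltn_ord. Qed.

Lemma cone_class_rshift (k : 'I_N) :
  cone_class (rshift 3 k) = if (k < p)%N then 1%N else 2%N.
Proof. by rewrite /cone_class /= ltn_add2l. Qed.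

Local Notation M := (char_poly_mx cone_matrix).

Definition class_incidence : 'M[{poly R}]_(N, 3) :=
  \matrix_(k, l) ((l == cone_class (rshift 3 k) :> nat)%:R).

Definition cone_diag : 'rV[{poly R}]_N :=
  \row_k (if (k < p)%N then 'X + c%:P else 'X).

Lemma cone_lower_right :
  - class_incidence *m ursubmx M + drsubmx M = diag_mx cone_diag.
Proof.
apply/matrixP => k k'; rewrite !mxE !big_ord_recl big_ord0 !mxE.
rewrite !cone_class_lshift !cone_class_rshift !eq_lrshift eq_rshift /=.
case: (eqVneq k k') => [<-|_]; first by case: (ltnP k p) => _ /=; rewrite ?polyC0; ring.
by case: (ltnP k p) => _; case: (ltnP k' p) => _ /=; rewrite ?polyC0; ring.
Qed.

Lemma cone_lower_left :
  dlsubmx M + diag_mx cone_diag *m class_incidence = class_incidence *m ulsubmx M.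
Proof.
apply/matrixP => k l; rewrite mul_diag_mx !mxE !big_ord_recl big_ord0 !mxE.
rewrite !cone_class_rshift eq_rlshift !eq_lshift.
by case: l => [[|[|[|//]]] ?]; case: (ltnP k p) => _ /=; rewrite ?polyC0; ring.
Qed.

Lemma cone_upper_left :
  ulsubmx M + ursubmx M *m class_incidence = char_poly_mx cone_quotient.
Proof.
apply/matrixP => i l; rewrite !mxE big_split_ord /=.
rewrite [\sum_(k < p) _](eq_bigr
    (fun=> - (class_weight (cone_class i) 1)%:P * (l == 1%N :> nat)%:R)); last first.
  by move=> k _; rewrite !mxE !cone_class_rshift /= ltn_ord eq_lrshift mulr0n sub0r.
rewrite [\sum_(k < q) _](eq_bigr
    (fun=> - (class_weight (cone_class i) 2)%:P * (l == 2%N :> nat)%:R)); last first.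
  by move=> k _; rewrite !mxE !cone_class_rshift /= ltnNge leq_addr eq_lrshift mulr0n sub0r.
rewrite !sumr_const !card_ord eq_lshift !cone_class_lshift.
case: i => [[|[|[|//]]] ?]; case: l => [[|[|[|//]]] ?] /=;
  by rewrite ?polyC0 ?polyCMn ?subn0 ?subn1; ring.
Qed.

Lemma char_poly_cone :
  char_poly cone_matrix = char_poly cone_quotient * ('X + c%:P) ^+ p * 'X ^+ q.
Proof.
pose P := block_mx 1%:M 0 class_incidence 1%:M.
pose Q := block_mx 1%:M 0 (- class_incidence) 1%:M.
have -> : char_poly cone_matrix = \det (Q *m M *m P).
  by rewrite !det_mulmx !det_lblock !det1 !mul1r mulr1.
rewrite -[M]submxK /P /Q !mulmx_block !(mul1mx, mulmx1, mul0mx, mulmx0, addr0, add0r).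
rewrite cone_lower_right -addrA cone_lower_left mulNmx addNr cone_upper_left.
rewrite det_ublock det_diag /char_poly -mulrA; congr (_ * _).
rewrite big_split_ord /=.
rewrite (eq_bigr (fun=> 'X + c%:P)) => [|k _]; last by rewrite mxE /= ltn_ord.
rewrite (eq_bigr (fun=> 'X)) => [|k _]; last by rewrite mxE /= ltnNge leq_addr.
by rewrite !prodr_const !card_ord.
Qed.

Lemma char_poly_cone_quotient :
  char_poly cone_quotient
  = 'X ^+ 2 * ('X - (c *+ p)%:P) - (a ^+ 2 *+ p.+1)%:P * 'X
    - (b ^+ 2 *+ q.+1)%:P * ('X - (c *+ p)%:P).
Proof.
pose f (i j : nat) :=
  'X *+ (i == j) - (class_weight i j *+ (class_size j - (i == j)))%:P.
rewrite /char_poly; have -> : char_poly_mx cone_quotient = \matrix_(i < 3, j < 3) f i j.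
  by apply/matrixP => i j; rewrite !mxE.
rewrite det_mx33 /f /= !subn0 !subn1 /= !polyC0 !polyCMn !rmorphXn /=; ring.
Qed.

End ConeMatrix.

Lemma char_poly_perm (R : comNzRingType) m (A : 'M[R]_m) (s : 'S_m) :
  char_poly (\matrix_(i, j) A (s i) (s j)) = char_poly A.
Proof.
rewrite /char_poly; have -> : char_poly_mx (\matrix_(i, j) A (s i) (s j))
          = perm_mx s *m char_poly_mx A *m perm_mx s^-1.
  by rewrite -row_permE -col_permE; apply/matrixP => i j; rewrite !mxE (inj_eq perm_inj).
by rewrite !det_mulmx !det_perm odd_permV mulrC mulrA -expr2 sqrr_sign mul1r.
Qed.

Lemma char_poly_relabel (R : comNzRingType) (T : finType) (f : T -> T -> R)
    m N (s : 'I_m -> T) (t : 'I_N -> T) :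
  m = #|T| -> N = #|T| -> injective s -> injective t ->
  char_poly (\matrix_(i, j) f (s i) (s j)) = char_poly (\matrix_(i, j) f (t i) (t j)).
Proof.
move=> mT NT s_inj t_inj; subst m N.
have [s' sK s'K] : bijective s by apply: inj_card_bij; rewrite ?card_ord.
have s't_inj : injective (s' \o t) by apply: inj_comp t_inj; apply: can_inj s'K.
rewrite -(char_poly_perm _ (perm s't_inj)).
by congr char_poly; apply/matrixP => i j; rewrite !mxE !permE /= !s'K.
Qed.

Section DihedralGenerators.
Local Open Scope group_scope.

Lemma sqr_mul_cycle_invert (gT : finGroupType) (x y a : gT) :
  y ^+ 2 = 1 -> x ^ y = x^-1 -> a \in <[x]> -> (a * y) ^+ 2 = 1.
Proof.
move=> y2 xy /cycleP[k ->].
have yV : y^-1 = y by apply/eqP; rewrite eq_invg_mul -expg2 y2.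
by rewrite expg2 -mulgA -{1}yV -/(conjg _ y) conjXg xy expVgn mulgV.
Qed.

Lemma dihedral_generators n : (1 < n)%N -> exists x y : 'D_(2 * n),
  [/\ #[x] = n, y \notin <[x]> & forall g, g \notin <[x]> -> g ^+ 2 = 1].
Proof.
move=> n_gt1; rewrite mul2n.
have /existsP[[x y] /= /eqP[defD xn y2 xy]] := isoGrp_hom (Grp_dihedral n_gt1).
have nXY : <[y]> \subset 'N(<[x]>) by rewrite cycle_subG inE -cycleJ xy cycleV.
rewrite norm_joinEr // in defD.
have card_eq := mul_cardG <[x]>%G <[y]>%G.
rewrite /= defD card_dihedral // -!orderE in card_eq.
have ox_le : (#[x] <= n)%N by apply: dvdn_leq; [lia | rewrite order_dvdn xn].
have oy_le : (#[y] <= 2)%N by apply: dvdn_leq; rewrite ?order_dvdn ?y2.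
have I_gt0 : (0 < #|<[x]> :&: <[y]>|)%N.
  by apply/card_gt0P; exists 1; rewrite inE !group1.
have I1 : #|<[x]> :&: <[y]>| = 1%N.
  apply/eqP; rewrite eqn_leq I_gt0 andbT -(@leq_pmul2l n.*2) ?muln1 -?card_eq; nia.
rewrite I1 muln1 in card_eq.
have ox : #[x] = n by nia.
have oy : #[y] = 2 by nia.
exists x, y; split=> // [|g gX].
- by apply/negP => yX; move: I1; rewrite (setIidPr _) ?cycle_subG // -orderE oy.
- have : g \in <[x]> * <[y]> by rewrite defD inE.
  case/mulsgP => a b aX; rewrite cycle2g // !inE => /orP[] /eqP -> gE.
    by move: gX; rewrite gE mulg1 aX.
  by rewrite gE (sqr_mul_cycle_invert y2 xy aX).
Qed.

End DihedralGenerators.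

Definition sombor_weight (R : rcfType) (d e : nat) : R :=
  Num.sqrt ((d ^ 2)%:R + (e ^ 2)%:R).

Definition sombor_entry (R : rcfType) (T : finType) (e : rel T) (u v : T) : R :=
  if e u v then sombor_weight R (gdeg e u) (gdeg e v) else 0.

Lemma sqr_sombor_weight (R : rcfType) d e :
  sombor_weight R d e ^+ 2 = (d ^ 2 + e ^ 2)%:R.
Proof. by rewrite sqr_sqrtr ?natrD ?addr_ge0 ?ler0n. Qed.

Lemma sombor_weight_diag (R : rcfType) d :
  sombor_weight R d d = d%:R * Num.sqrt 2.
Proof.
rewrite /sombor_weight -natrD addnn -muln2 natrM natrX sqrtrM ?exprn_ge0 ?ler0n //.
by rewrite sqrtr_sqr ger0_norm ?ler0n.
Qed.

Section DihedralEnhancedPowerGraph.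
Local Open Scope group_scope.
Variables (gT : finGroupType) (n : nat) (x y : gT).
Hypotheses (n_gt1 : (1 < n)%N) (card_gT : #|gT| = n.*2) (order_x : #[x] = n)
  (y_notin : y \notin <[x]>) (sqr_notin : forall g, g \notin <[x]> -> g ^+ 2 = 1).
Local Notation X := <[x]>.

Lemma cycle_notin g : g \notin X -> <[g]> = [set 1; g].
Proof.
move=> gX; apply/cycle2g/(prime_nt_dvdP (isT : prime 2)).
  by rewrite order_eq1; apply: contraNneq gX => ->; apply: group1.
by rewrite order_dvdn sqr_notin.
Qed.

Lemma epg_adjE g h :
  epg_adj g h = (g != h) && [|| (g \in X) && (h \in X), g == 1 | h == 1].
Proof.
rewrite /epg_adj; case: eqVneq => //= gh; apply/existsP/idP => [[z] | ].
  case: (boolP (z \in X)) => [zX | /cycle_notin ->] /andP[gz hz].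
    have sZX : <[z]> \subset X by rewrite cycle_subG.
    by rewrite (subsetP sZX _ gz) (subsetP sZX _ hz).
  rewrite !inE in gz hz; case/orP: gz => /eqP gE; first by rewrite gE eqxx orbT.
  by case/orP: hz => /eqP hE; [rewrite hE eqxx !orbT | rewrite gE hE eqxx in gh].
case/or3P => [/andP[gX hX] | /eqP-> | /eqP->]; first by exists x; rewrite gX hX.
  by exists h; rewrite group1 cycle_id.
by exists g; rewrite group1 cycle_id.
Qed.

Lemma gdeg_epg g :
  gdeg (@epg_adj gT) g = if g == 1 then (n.*2).-1 else if g \in X then n.-1 else 1%N.
Proof.
rewrite /gdeg; case: (eqVneq g 1) => [-> | g1].
  have -> : [set h | @epg_adj gT 1 h] = [set~ 1].
    by apply/setP => h; rewrite !inE epg_adjE eqxx orbT andbT eq_sym.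
  by rewrite cardsC1 card_gT.
case: (boolP (g \in X)) => gX.
  have -> : [set h | epg_adj g h] = X :\ g.
    apply/setP => h; rewrite !inE epg_adjE gX (negbTE g1) /= eq_sym.
    by case: (eqVneq h 1) => [-> | _]; rewrite ?group1 ?orbF.
  by move: (cardsD1 g X); rewrite gX -orderE order_x => ->.
have -> : [set h | epg_adj g h] = [set 1].
  apply/setP => h; rewrite !inE epg_adjE (negbTE gX) (negbTE g1) /=.
  by case: (eqVneq h 1) => [-> | ]; rewrite ?andbT ?andbF // eq_sym.
by rewrite cards1.
Qed.

(* Index 0 is 1, index 1 is x and index 2 is y, as cone_class requires; then
   come x^2, ..., x^(n-1) and x y, ..., x^(n-1) y. *)
Definition rot_exponent (i : nat) : nat :=
  (if i == 2 then 0 else if i <= 1 then i else if i <= n then i.-1 else i - n)%N.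

Definition refl_index (i : nat) : bool := (i == 2) || (n < i)%N.

Definition dihedral_enum (i : nat) : gT := x ^+ rot_exponent i * y ^+ refl_index i.

Lemma rot_exponent_lt i : (i < n.*2 -> rot_exponent i < n)%N.
Proof. by rewrite /rot_exponent; do !case: ifP; lia. Qed.

Lemma eq_mulg_cycle a b (r s : bool) : (a < n)%N -> (b < n)%N ->
  (x ^+ a * y ^+ r == x ^+ b * y ^+ s) = (a == b) && (r == s).
Proof.
move=> lt_a lt_b; have xE : (x ^+ a == x ^+ b) = (a == b).
  by rewrite eq_expg_mod_order order_x !modn_small.
case: r; case: s; rewrite /= ?expg1 ?expg0 ?mulg1 ?(inj_eq (mulIg _)) ?andbT ?andbF //.
  apply/negP => /eqP E; case/negP: y_notin.
  by rewrite -(mulKg (x ^+ a) y) E groupM ?groupV ?mem_cycle.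
apply/negP => /eqP E; case/negP: y_notin.
by rewrite -(mulKg (x ^+ b) y) -E groupM ?groupV ?mem_cycle.
Qed.

Lemma dihedral_enum_eq i j : (i < n.*2)%N -> (j < n.*2)%N ->
  (dihedral_enum i == dihedral_enum j) = (i == j).
Proof.
move=> lt_i lt_j; rewrite eq_mulg_cycle ?rot_exponent_lt //.
by rewrite /rot_exponent /refl_index; apply/idP/idP; do !case: ifP; lia.
Qed.

Definition epg_class (g : gT) : nat := if g == 1 then 0%N else if g \in X then 1%N else 2%N.

Lemma epg_class_enum i : (i < n.*2)%N ->
  epg_class (dihedral_enum i) = cone_class (n - 2) i.
Proof.
move=> lt_i; have enum1 : (dihedral_enum i == 1) = (rot_exponent i == 0%N) && ~~ refl_index i.
  have := @eq_mulg_cycle (rot_exponent i) 0 (refl_index i) false.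
  by rewrite !expg0 mulg1 eqbF_neg => ->; rewrite ?rot_exponent_lt //; lia.
have enumX : (dihedral_enum i \in X) = ~~ refl_index i.
  by rewrite groupMl ?mem_cycle //; case: refl_index; rewrite ?group1 ?expg1 ?(negbTE y_notin).
rewrite /epg_class enum1 enumX /cone_class /rot_exponent /refl_index.
by do ![case: ifP => /=]; lia.
Qed.

Lemma sombor_entry_epg (R : rcfType) g h :
  sombor_entry R (@epg_adj gT) g h
  = if g == h then 0%R
    else class_weight (sombor_weight R (n.*2).-1 n.-1) (sombor_weight R (n.*2).-1 1)
           (sombor_weight R n.-1 n.-1) (epg_class g) (epg_class h).
Proof.
rewrite /sombor_entry epg_adjE !gdeg_epg /epg_class; case: eqVneq => //= gh.
case: (eqVneq g 1) => [g1 | _]; case: (eqVneq h 1) => [h1 | _] /=; rewrite ?orbT ?orbF.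
- by rewrite g1 h1 eqxx in gh.
- by case: (h \in X).
- by case: (g \in X); rewrite /sombor_weight addrC.
- by case: (g \in X); case: (h \in X).
Qed.

Lemma char_poly_sombor_epg (R : rcfType) :
  char_poly (sombor_matrix R (@epg_adj gT))
  = char_poly (cone_matrix (n - 2) n.-1 (sombor_weight R (n.*2).-1 n.-1)
      (sombor_weight R (n.*2).-1 1) (sombor_weight R n.-1 n.-1)).
Proof.
have size_eq : (3 + (n - 2 + n.-1))%N = #|gT| by rewrite card_gT; lia.
have lt_size (i : 'I_(3 + (n - 2 + n.-1))) : (i < n.*2)%N by rewrite -card_gT -size_eq.
rewrite -[sombor_matrix _ _]/(\matrix_(i, j) sombor_entry R _ (enum_val i) (enum_val j)).
rewrite (char_poly_relabel _ (t := fun i : 'I_(3 + (n - 2 + n.-1)) => dihedral_enum i)) //.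
- congr char_poly; apply/matrixP => i j.
  by rewrite !mxE sombor_entry_epg dihedral_enum_eq // !epg_class_enum.
- exact: enum_val_inj.
- by move=> i j /eqP; rewrite dihedral_enum_eq // => /eqP /val_inj.
Qed.

End DihedralEnhancedPowerGraph.

Theorem corollary5p1 (R : rcfType) (n : nat) : (3 <= n)%N ->
  let s2 : R := Num.sqrt 2 in
  let c : R := (n.-1)%:R * ((n - 2)%N)%:R * s2 in
  char_poly (@sombor_matrix R _ (@epg_adj 'D_(2 * n)))
  = ('X + ((n.-1)%:R * s2)%:P) ^+ (n - 2)%N * 'X ^+ (n.-1) *
    ('X ^+ 2 * ('X - c%:P)
     - ((n.-1)%:R * ((5 * n ^ 2 + 2 - 6 * n)%N)%:R)%:P * 'X
     - (((2 * n * (2 * n ^ 2 + 1 - 2 * n))%N)%:R)%:P * ('X - c%:P)).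
Proof.
move=> n_ge3 s2 c; have n_gt1 : (1 < n)%N by lia.
have [x [y [order_x y_notin sqr_notin]]] := dihedral_generators n_gt1.
have card_D : #|'D_(2 * n)| = n.*2.
  by rewrite mul2n -cardsT (card_dihedral n_gt1).
rewrite (char_poly_sombor_epg n_gt1 card_D order_x y_notin sqr_notin).
rewrite char_poly_cone char_poly_cone_quotient !sqr_sombor_weight !sombor_weight_diag.
have -> : (n - 2).+1 = n.-1 by lia.
have -> : (n.-1).+1 = n by lia.
have -> : ((n.*2.-1 ^ 2 + n.-1 ^ 2)%:R *+ n.-1 : R)
          = n.-1%:R * (5 * n ^ 2 + 2 - 6 * n)%:R.
  by rewrite -mulr_natl -!natrM; congr _%:R; nia.
have -> : ((n.*2.-1 ^ 2 + 1 ^ 2)%:R *+ n : R) = (2 * n * (2 * n ^ 2 + 1 - 2 * n))%:R.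
  by rewrite -mulr_natl -natrM; congr _%:R; nia.
rewrite /c /s2; ring.
Qed.
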